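(* There is a function $F:[1,\infty)\to[1,\infty)$ such that the following holds. Let $G$ be a finite connected unweighted graph with its graph distance, and suppose $\tau:V(G)\to X$ is a bilipschitz embedding of distortion $D$ into a finite-dimensional Banach space $X$. Then for every infinite-dimensional Banach space $Z$ containing $X$ as a subspace, the thickening $TG$ admits a bilipschitz embedding $f:TG\to Z$ with distortion at most $F(D)$.
   Context: The thickening $TG$ of a graph $G$: for each edge $uv$ of $G$ join $u$ and $v$ by a set $t(uv)$ isometric to $[0,1]$ (different such sets meet only at common endpoints); $TG$ is the union of all $t(uv)$, with the distance between two points defined as the length of the shortest curve in $TG$ joining them. A bilipschitz embedding has distortion $C$ if $C$ is the least constant such that $r d(u,v)\le d(f(u),f(v))\le rC d(u,v)$ for some $r>0$. *)

From Stdlib Require Import Reals Lra List Classical ClassicalEpsilon.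
Open Scope R_scope.

Record NormedSpace := mkNS {
  ns_car :> Type;
  ns_zero : ns_car;
  ns_add : ns_car -> ns_car -> ns_car;
  ns_opp : ns_car -> ns_car;
  ns_scal : R -> ns_car -> ns_car;
  ns_norm : ns_car -> R;
  ns_add_assoc : forall x y z, ns_add x (ns_add y z) = ns_add (ns_add x y) z;
  ns_add_comm : forall x y, ns_add x y = ns_add y x;
  ns_add_zero : forall x, ns_add x ns_zero = x;
  ns_add_opp : forall x, ns_add x (ns_opp x) = ns_zero;
  ns_scal_one : forall x, ns_scal 1 x = x;
  ns_scal_assoc : forall a b x, ns_scal a (ns_scal b x) = ns_scal (a * b) x;
  ns_scal_distr_l : forall a x y, ns_scal a (ns_add x y) = ns_add (ns_scal a x) (ns_scal a y);
  ns_scal_distr_r : forall a b x, ns_scal (a + b) x = ns_add (ns_scal a x) (ns_scal b x);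
  ns_norm_eq0 : forall x, ns_norm x = 0 -> x = ns_zero;
  ns_norm_scal : forall a x, ns_norm (ns_scal a x) = Rabs a * ns_norm x;
  ns_norm_triangle : forall x y, ns_norm (ns_add x y) <= ns_norm x + ns_norm y
}.

Definition ns_dist (X : NormedSpace) (x y : X) : R :=
  ns_norm X (ns_add X x (ns_opp X y)).

Definition complete (X : NormedSpace) : Prop :=
  forall u : nat -> X,
    (forall eps, 0 < eps -> exists N, forall m n, (N <= m)%nat -> (N <= n)%nat ->
        ns_dist X (u m) (u n) < eps) ->
    exists l : X, forall eps, 0 < eps -> exists N, forall n, (N <= n)%nat ->
        ns_dist X (u n) l < eps.

Definition Banach (X : NormedSpace) : Prop := complete X.

Definition lincomb (X : NormedSpace) (lc : list (R * X)) : X :=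
  fold_right (fun p acc => ns_add X (ns_scal X (fst p) (snd p)) acc) (ns_zero X) lc.

Definition finite_dimensional (X : NormedSpace) : Prop :=
  exists basis : list X, forall x : X,
    exists lc : list (R * X), (forall p, In p lc -> In (snd p) basis) /\ x = lincomb X lc.

Definition infinite_dimensional (X : NormedSpace) : Prop := ~ finite_dimensional X.

Definition is_subspace_of (X Z : NormedSpace) : Prop :=
  exists j : X -> Z,
    (forall x y, j (ns_add X x y) = ns_add Z (j x) (j y)) /\
    (forall a x, j (ns_scal X a x) = ns_scal Z a (j x)) /\
    (forall x, ns_norm Z (j x) = ns_norm X x).

Definition distortion_le {A B : Type} (dA : A -> A -> R) (dB : B -> B -> R)
  (f : A -> B) (C : R) : Prop :=
  exists r, 0 < r /\ forall x y, r * dA x y <= dB (f x) (f y) <= r * C * dA x y.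

Definition has_distortion {A B : Type} (dA : A -> A -> R) (dB : B -> B -> R)
  (f : A -> B) (D : R) : Prop :=
  distortion_le dA dB f D /\ (forall C, distortion_le dA dB f C -> D <= C).

Inductive walk {V : Type} (adj : V -> V -> Prop) : V -> V -> nat -> Prop :=
| walk_nil : forall u, walk adj u u 0
| walk_cons : forall u v w n, adj u v -> walk adj v w n -> walk adj u w (S n).

Definition finite_type (V : Type) : Prop := exists l : list V, forall v, In v l.

Definition simple_graph {V : Type} (adj : V -> V -> Prop) : Prop :=
  (forall u v, adj u v -> adj v u) /\ (forall u, ~ adj u u).

Definition connected {V : Type} (adj : V -> V -> Prop) : Prop :=
  forall u v, exists n, walk adj u v n.

Definition gdist {V : Type} (adj : V -> V -> Prop) (u v : V) : nat :=
  epsilon (inhabits 0%nat)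
    (fun n => walk adj u v n /\ forall m, walk adj u v m -> (n <= m)%nat).

Definition gdistR {V : Type} (adj : V -> V -> Prop) (u v : V) : R :=
  INR (gdist adj u v).

(* A point of TG is given by an edge (a, b) and a position t in [0,1]:
   it is the point of t(ab) at distance t from a.  (Several triples may
   represent the same point; the distance below is then 0 between them.) *)
Record TPoint {V : Type} (adj : V -> V -> Prop) := mkTP {
  tp_a : V; tp_b : V; tp_edge : adj tp_a tp_b;
  tp_t : R; tp_t_range : 0 <= tp_t <= 1 }.
Arguments tp_a {V adj}. Arguments tp_b {V adj}. Arguments tp_t {V adj}.

Definition Rmin4 (a b c d : R) : R := Rmin (Rmin a b) (Rmin c d).

(* Length of a shortest curve in TG between p and q: either go directly
   inside a common edge, or leave p's edge through one endpoint, travel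
   a shortest path of G, and enter q's edge through one of its endpoints. *)
Definition tdist {V : Type} (adj : V -> V -> Prop) (p q : TPoint adj) : R :=
  let s := tp_t p in let t := tp_t q in
  let via := Rmin4
     (s + gdistR adj (tp_a p) (tp_a q) + t)
     (s + gdistR adj (tp_a p) (tp_b q) + (1 - t))
     ((1 - s) + gdistR adj (tp_b p) (tp_a q) + t)
     ((1 - s) + gdistR adj (tp_b p) (tp_b q) + (1 - t)) in
  if excluded_middle_informative (tp_a p = tp_a q /\ tp_b p = tp_b q)
  then Rmin via (Rabs (s - t))
  else if excluded_middle_informative (tp_a p = tp_b q /\ tp_b p = tp_a q)
  then Rmin via (Rabs (s - (1 - t)))
  else via.

(* Rescale tau and view it in Z, so that the vertices go to points w v with
   d_G(u, v) <= |w u - w v| <= D d_G(u, v).  Since Z is infinite-dimensional, Riesz's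
   lemma yields unit vectors E_ab, one per edge, each at distance >= 1/2 from the span
   of X and of the previously chosen ones.  The point at parameter s on the edge ab is
   sent to w a + s (w b - w a) + min(s, 1 - s) E_ab.  Routing through vertices gives the
   upper bound (D + 1) d_TG.  For the lower bound, on a common edge the E_ab-component
   detects |s - t|; on distinct edges the two E-components are independent of all else,
   so both tent heights are at most 6 |f p - f q|, and the rest is controlled by the
   bilipschitz bound on the vertices.  The distortion is (D + 1)(12 D + 25). *)

From Stdlib Require Import Reals Lra Lia List Wf_nat Classical ClassicalEpsilon.
Open Scope R_scope.

(** * Identities in a real normed space *)

Notation vsub X x y := (ns_add X x (ns_opp X y)).

Section VectorAlgebra.
Variable X : NormedSpace.

Lemma ns_add0l x : ns_add X (ns_zero X) x = x.
Proof. rewrite ns_add_comm; apply ns_add_zero. Qed.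

Lemma ns_scal0l x : ns_scal X 0 x = ns_zero X.
Proof.
  assert (Hdouble : ns_add X (ns_scal X 0 x) (ns_scal X 0 x) = ns_scal X 0 x).
  { rewrite <- ns_scal_distr_r; f_equal; ring. }
  apply (f_equal (fun y => ns_add X y (ns_opp X (ns_scal X 0 x)))) in Hdouble.
  now rewrite <- ns_add_assoc, !ns_add_opp, ns_add_zero in Hdouble.
Qed.

Lemma ns_scal0r a : ns_scal X a (ns_zero X) = ns_zero X.
Proof. rewrite <- (ns_scal0l (ns_zero X)), ns_scal_assoc; f_equal; ring. Qed.

Lemma ns_opp_scal x : ns_opp X x = ns_scal X (-1) x.
Proof.
  assert (Hinv : ns_add X x (ns_scal X (-1) x) = ns_zero X).
  { rewrite <- (ns_scal_one X x) at 1; rewrite <- ns_scal_distr_r.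
    replace (1 + -1) with 0 by ring; apply ns_scal0l. }
  transitivity (ns_add X (ns_opp X x) (ns_add X x (ns_scal X (-1) x))).
  - now rewrite Hinv, ns_add_zero.
  - now rewrite ns_add_assoc, (ns_add_comm X (ns_opp X x)), ns_add_opp, ns_add0l.
Qed.

Lemma ns_add_swap a b c d :
  ns_add X (ns_add X a b) (ns_add X c d) = ns_add X (ns_add X a c) (ns_add X b d).
Proof.
  rewrite <- !ns_add_assoc; f_equal; rewrite !ns_add_assoc; f_equal; apply ns_add_comm.
Qed.

End VectorAlgebra.

(* A reflective decision procedure for identities in a real vector space:
   both sides are reified and compared through their coefficient on each atom. *)
Inductive vexpr :=
| VAtom (n : nat) | VZero | VAdd (a b : vexpr) | VOpp (a : vexpr) | VScal (r : R) (a : vexpr).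

Fixpoint vexpr_eval (X : NormedSpace) (env : list X) (e : vexpr) : X :=
  match e with
  | VAtom n => nth n env (ns_zero X)
  | VZero => ns_zero X
  | VAdd a b => ns_add X (vexpr_eval X env a) (vexpr_eval X env b)
  | VOpp a => ns_opp X (vexpr_eval X env a)
  | VScal r a => ns_scal X r (vexpr_eval X env a)
  end.

Fixpoint vexpr_coef (e : vexpr) (i : nat) : R :=
  match e with
  | VAtom n => if Nat.eqb n i then 1 else 0
  | VZero => 0
  | VAdd a b => vexpr_coef a i + vexpr_coef b i
  | VOpp a => - vexpr_coef a i
  | VScal r a => r * vexpr_coef a i
  end.

Fixpoint coef_sum (X : NormedSpace) (k : nat) (env : list X) (c : nat -> R) : X :=
  match env with
  | nil => ns_zero X
  | v :: env' => ns_add X (ns_scal X (c k) v) (coef_sum X (S k) env' c)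
  end.

Section CoefSum.
Variable X : NormedSpace.

Lemma coef_sum_ext env : forall k c1 c2,
  (forall i, (k <= i < k + length env)%nat -> c1 i = c2 i) ->
  coef_sum X k env c1 = coef_sum X k env c2.
Proof.
  induction env as [|v env IH]; intros k c1 c2 H; simpl in *; auto.
  rewrite (H k) by lia; f_equal; apply IH; intros; apply H; lia.
Qed.

Lemma coef_sum0 env : forall k, coef_sum X k env (fun _ => 0) = ns_zero X.
Proof.
  induction env; intros; simpl; auto.
  now rewrite ns_scal0l, IHenv, ns_add_zero.
Qed.

Lemma coef_sumD env : forall k c1 c2,
  coef_sum X k env (fun i => c1 i + c2 i) =
  ns_add X (coef_sum X k env c1) (coef_sum X k env c2).
Proof.
  induction env; intros; simpl; [now rewrite ns_add_zero|].
  now rewrite IHenv, ns_scal_distr_r, ns_add_swap.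
Qed.

Lemma coef_sumZ env : forall k r c,
  coef_sum X k env (fun i => r * c i) = ns_scal X r (coef_sum X k env c).
Proof.
  induction env; intros; simpl; [now rewrite ns_scal0r|].
  now rewrite IHenv, ns_scal_distr_l, ns_scal_assoc.
Qed.

Lemma coef_sum_atom env : forall k n,
  coef_sum X k env (fun i => if Nat.eqb n i then 1 else 0) =
  if Nat.leb k n then nth (n - k) env (ns_zero X) else ns_zero X.
Proof.
  induction env as [|v env IH]; intros; simpl.
  - destruct (Nat.leb k n); [destruct (n - k)%nat|]; auto.
  - rewrite IH; destruct (Nat.eqb n k) eqn:E.
    + apply Nat.eqb_eq in E; subst.
      replace (Nat.leb (S k) k) with false by (symmetry; apply Nat.leb_gt; lia).
      now rewrite Nat.leb_refl, Nat.sub_diag, ns_scal_one, ns_add_zero.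
    + apply Nat.eqb_neq in E; rewrite ns_scal0l, ns_add0l.
      destruct (Nat.leb (S k) n) eqn:E1.
      * apply Nat.leb_le in E1.
        replace (Nat.leb k n) with true by (symmetry; apply Nat.leb_le; lia).
        now replace (n - k)%nat with (S (n - S k)) by lia.
      * apply Nat.leb_gt in E1.
        now replace (Nat.leb k n) with false by (symmetry; apply Nat.leb_gt; lia).
Qed.

Lemma vexpr_eval_coef env e : vexpr_eval X env e = coef_sum X 0 env (vexpr_coef e).
Proof.
  induction e; simpl.
  - rewrite coef_sum_atom; simpl; now rewrite Nat.sub_0_r.
  - symmetry; apply coef_sum0.
  - now rewrite coef_sumD, IHe1, IHe2.
  - rewrite IHe, ns_opp_scal, <- coef_sumZ; apply coef_sum_ext; intros; ring.
  - now rewrite coef_sumZ, IHe.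
Qed.

Lemma vexpr_eval_eq env e1 e2 :
  map (vexpr_coef e1) (seq 0 (length env)) = map (vexpr_coef e2) (seq 0 (length env)) ->
  vexpr_eval X env e1 = vexpr_eval X env e2.
Proof.
  intro H; rewrite !vexpr_eval_coef; apply coef_sum_ext; simpl; intros i Hi.
  assert (Hin : In i (seq 0 (length env))) by (apply in_seq; lia).
  revert H Hin; generalize (seq 0 (length env)).
  induction l; simpl; intros H Hin; [tauto|].
  injection H; intros; destruct Hin; subst; auto.
Qed.

End CoefSum.

Lemma cons_congr (x y : R) l l' : x = y -> l = l' -> x :: l = y :: l'.
Proof. now intros -> ->. Qed.

Ltac vmem x l :=
  match l with
  | nil => constr:(false)
  | x :: _ => constr:(true)
  | _ :: ?l' => vmem x l'
  end.

Ltac vcollect X t env :=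
  match t with
  | ns_add X ?a ?b => let env1 := vcollect X a env in vcollect X b env1
  | ns_opp X ?a => vcollect X a env
  | ns_scal X _ ?a => vcollect X a env
  | ns_zero X => env
  | _ => let b := vmem t env in
         match b with true => env | false => constr:(t :: env) end
  end.

Ltac vindex x l :=
  match l with
  | x :: _ => constr:(O)
  | _ :: ?l' => let n := vindex x l' in constr:(S n)
  end.

Ltac vreify X t env :=
  match t with
  | ns_add X ?a ?b =>
      let ra := vreify X a env in let rb := vreify X b env in constr:(VAdd ra rb)
  | ns_opp X ?a => let ra := vreify X a env in constr:(VOpp ra)
  | ns_scal X ?r ?a => let ra := vreify X a env in constr:(VScal r ra)
  | ns_zero X => constr:(VZero)
  | _ => let n := vindex t env in constr:(VAtom n)
  end.

(* Proves an equation between vector expressions; the coefficient equations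
   left over are closed by [ring] when possible and returned otherwise. *)
Ltac veq :=
  match goal with
  | |- @eq (ns_car ?X) ?a ?b =>
    let env0 := vcollect X a (@nil (ns_car X)) in
    let env := vcollect X b env0 in
    let ra := vreify X a env in
    let rb := vreify X b env in
    change (vexpr_eval X env ra = vexpr_eval X env rb);
    apply vexpr_eval_eq; cbn [vexpr_coef map seq length Nat.eqb];
    repeat (apply cons_congr; [try ring|]); try reflexivity
  end.

Section NormFacts.
Variable X : NormedSpace.

Lemma norm0 : ns_norm X (ns_zero X) = 0.
Proof. rewrite <- (ns_scal0r X 0), ns_norm_scal, Rabs_R0; ring. Qed.

Lemma normN x : ns_norm X (ns_opp X x) = ns_norm X x.
Proof. rewrite ns_opp_scal, ns_norm_scal, Rabs_left by lra; ring. Qed.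

Lemma norm_ge0 x : 0 <= ns_norm X x.
Proof.
  pose proof (ns_norm_triangle X x (ns_opp X x)) as H.
  rewrite ns_add_opp, norm0, normN in H; lra.
Qed.

Lemma norm_subC x y : ns_norm X (vsub X x y) = ns_norm X (vsub X y x).
Proof. replace (vsub X x y) with (ns_opp X (vsub X y x)) by veq; apply normN. Qed.

Lemma norm_add_ge_sub x y : ns_norm X x - ns_norm X y <= ns_norm X (ns_add X x y).
Proof.
  pose proof (ns_norm_triangle X (ns_add X x y) (ns_opp X y)) as H.
  replace (ns_add X (ns_add X x y) (ns_opp X y)) with x in H by veq.
  rewrite normN in H; lra.
Qed.

Lemma norm_sub_triangle a b c :
  ns_norm X (vsub X a c) <= ns_norm X (vsub X a b) + ns_norm X (vsub X b c).
Proof.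
  replace (vsub X a c) with (ns_add X (vsub X a b) (vsub X b c)) by veq.
  apply ns_norm_triangle.
Qed.

End NormFacts.

(** * Finite spans and Riesz's lemma *)

Section Spans.
Variable X : NormedSpace.

Inductive span (L : list X) : X -> Prop :=
| span_base v : In v L -> span L v
| span_zero : span L (ns_zero X)
| span_add x y : span L x -> span L y -> span L (ns_add X x y)
| span_scal a x : span L x -> span L (ns_scal X a x).

Lemma span_opp L x : span L x -> span L (ns_opp X x).
Proof. intro; rewrite ns_opp_scal; now apply span_scal. Qed.

Lemma span_sub L x y : span L x -> span L y -> span L (vsub X x y).
Proof. intros; apply span_add; auto; now apply span_opp. Qed.

Lemma span_sub_list (L L' : list X) x :
  (forall v, In v L -> In v L') -> span L x -> span L' x.
Proof.
  intros H Hx; induction Hx; [apply span_base; auto | apply span_zero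
  | now apply span_add | now apply span_scal].
Qed.

Lemma span_nil x : span nil x -> x = ns_zero X.
Proof.
  intro H; induction H as [v []| |x y _ -> _ ->|a x _ ->];
    auto using ns_add_zero, ns_scal0r.
Qed.

Lemma span_consE v L x :
  span (v :: L) x -> exists c y, span L y /\ x = ns_add X y (ns_scal X c v).
Proof.
  intro H; induction H as [w [<-|Hw]| |x y _ (c1 & y1 & H1 & ->) _ (c2 & y2 & H2 & ->)
                          |a x _ (c & y & Hy & ->)].
  - exists 1, (ns_zero X); split; [apply span_zero | veq].
  - exists 0, w; split; [now apply span_base | veq].
  - exists 0, (ns_zero X); split; [apply span_zero | veq].
  - exists (c1 + c2), (ns_add X y1 y2); split; [now apply span_add | veq].
  - exists (a * c), (ns_scal X a y); split; [now apply span_scal | veq].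
Qed.

Lemma span_cons v L y c : span L y -> span (v :: L) (ns_add X y (ns_scal X c v)).
Proof.
  intro H; apply span_add.
  - apply (span_sub_list L); simpl; auto.
  - apply span_scal, span_base; simpl; auto.
Qed.

Definition span_closed (L : list X) : Prop :=
  forall z, (forall eps, 0 < eps -> exists y, span L y /\ ns_norm X (vsub X z y) < eps) ->
  span L z.

Lemma span_gap L z : span_closed L -> ~ span L z ->
  exists e0, 0 < e0 /\ forall y, span L y -> e0 <= ns_norm X (vsub X z y).
Proof.
  intros Hcl Hz; apply NNPP; intro Hgap; apply Hz, Hcl; intros eps Heps.
  apply NNPP; intro Hfar; apply Hgap; exists eps; split; auto.
  intros y Hy; apply Rnot_lt_le; intro Hlt; apply Hfar; eauto.
Qed.

Lemma coef_le_norm_of_gap L v e0 y c :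
  (forall y, span L y -> e0 <= ns_norm X (vsub X v y)) -> span L y ->
  Rabs c * e0 <= ns_norm X (ns_add X y (ns_scal X c v)).
Proof.
  intros Hgap Hy; destruct (Req_dec c 0) as [->|Hc].
  - rewrite Rabs_R0, Rmult_0_l; apply norm_ge0.
  - replace (ns_add X y (ns_scal X c v)) with (ns_scal X c (vsub X v (ns_scal X (- / c) y)))
      by (veq; field; auto).
    rewrite ns_norm_scal; apply Rmult_le_compat_l; [apply Rabs_pos|].
    now apply Hgap, span_scal.
Qed.

Lemma inv_succ_small eps : 0 < eps -> exists N, forall k, (N <= k)%nat -> / INR (S k) < eps.
Proof.
  intro Heps; destruct (archimed_cor1 eps Heps) as (N & HN & HN0); exists N; intros k Hk.
  apply Rle_lt_trans with (/ INR N); auto.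
  apply Rinv_le_contravar; [apply lt_0_INR; auto | apply le_INR; lia].
Qed.

Lemma span_cons_approx_seq v L z :
  (forall eps, 0 < eps -> exists y, span (v :: L) y /\ ns_norm X (vsub X z y) < eps) ->
  exists (cs : nat -> R) (ys : nat -> X), (forall k, span L (ys k)) /\
    forall k, ns_norm X (vsub X z (ns_add X (ys k) (ns_scal X (cs k) v))) < / INR (S k).
Proof.
  intro Hz.
  assert (Happrox : forall k : nat, exists p : R * X, span L (snd p) /\
            ns_norm X (vsub X z (ns_add X (snd p) (ns_scal X (fst p) v))) < / INR (S k)).
  { intro k; destruct (Hz (/ INR (S k))) as (x & Hx & Hzx).
    { apply Rinv_0_lt_compat, lt_0_INR; lia. }
    destruct (span_consE v L x Hx) as (c & y & Hy & ->); now exists (c, y). }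
  destruct (choice _ Happrox) as (p & Hp).
  exists (fun k => fst (p k)), (fun k => snd (p k)); split; apply Hp.
Qed.

(* The coefficients of v along an approximating sequence are Cauchy by
   [coef_le_norm_of_gap]; their limit c gives z - c v in the closure of span L. *)
Lemma span_cons_closed v L : span_closed L -> ~ span L v -> span_closed (v :: L).
Proof.
  intros Hcl Hv z Hz.
  destruct (span_gap L v Hcl Hv) as (e0 & He0 & Hgap).
  destruct (span_cons_approx_seq v L z Hz) as (cs & ys & Hys & Hu).
  set (u k := ns_add X (ys k) (ns_scal X (cs k) v)).
  change (forall k, ns_norm X (vsub X z (u k)) < / INR (S k)) in Hu.
  assert (Hcauchy : Cauchy_crit cs).
  { intros eps Heps; destruct (inv_succ_small (eps * e0 / 2)) as (N & HN).
    { apply Rdiv_lt_0_compat; [apply Rmult_lt_0_compat|]; lra. }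
    exists N; intros n m Hn Hm; unfold R_dist.
    pose proof (coef_le_norm_of_gap L v e0 (vsub X (ys n) (ys m)) (cs n - cs m) Hgap
                  (span_sub L _ _ (Hys n) (Hys m))) as Hcoef.
    replace (ns_add X (vsub X (ys n) (ys m)) (ns_scal X (cs n - cs m) v))
      with (vsub X (u n) (u m)) in Hcoef by (unfold u; veq).
    pose proof (norm_sub_triangle X (u n) z (u m)) as Htri.
    rewrite (norm_subC X (u n) z) in Htri.
    pose proof (Hu n); pose proof (Hu m); pose proof (HN n Hn); pose proof (HN m Hm).
    apply (Rmult_lt_reg_r e0); lra. }
  destruct (R_complete cs Hcauchy) as (c & Hc).
  replace z with (ns_add X (vsub X z (ns_scal X c v)) (ns_scal X c v)) by veq.
  apply span_cons, Hcl; intros eps Heps.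
  pose proof (norm_ge0 X v) as Hv0.
  destruct (inv_succ_small (eps / 2)) as (N1 & HN1); [lra|].
  destruct (Hc (eps / (2 * (ns_norm X v + 1)))) as (N2 & HN2); [apply Rdiv_lt_0_compat; lra|].
  set (k := Nat.max N1 N2); exists (ys k); split; auto.
  replace (vsub X (vsub X z (ns_scal X c v)) (ys k))
    with (ns_add X (vsub X z (u k)) (ns_scal X (cs k - c) v)) by (unfold u; veq).
  eapply Rle_lt_trans; [apply ns_norm_triangle|]; rewrite ns_norm_scal.
  pose proof (Hu k); pose proof (HN1 k (Nat.le_max_l _ _)) as H1.
  pose proof (HN2 k (Nat.le_max_r _ _)) as H2; unfold R_dist in H2.
  assert (Rabs (cs k - c) * ns_norm X v <= eps / (2 * (ns_norm X v + 1)) * (ns_norm X v + 1))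
    by (apply Rmult_le_compat; try apply Rabs_pos; lra).
  replace (eps / (2 * (ns_norm X v + 1)) * (ns_norm X v + 1)) with (eps / 2) in * by (field; lra).
  lra.
Qed.

Lemma span_closed_all L : span_closed L.
Proof.
  induction L as [|v L IH]; intros z Hz.
  - assert (Hz0 : ns_norm X z = 0).
    { apply Rle_antisym; [|apply norm_ge0]; apply Rnot_lt_le; intro Hpos.
      destruct (Hz _ Hpos) as (y & Hy & Hlt); apply span_nil in Hy; subst.
      replace (vsub X z (ns_zero X)) with z in Hlt by veq; lra. }
    apply ns_norm_eq0 in Hz0; subst; apply span_zero.
  - destruct (classic (span L v)) as [Hv|Hv].
    + apply (span_sub_list L); [simpl; auto|]; apply IH; intros eps Heps.
      destruct (Hz eps Heps) as (x & Hx & Hlt).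
      destruct (span_consE v L x Hx) as (c & y & Hy & ->).
      exists (ns_add X y (ns_scal X c v)); split; auto.
      apply span_add; auto; now apply span_scal.
    + exact (span_cons_closed v L IH Hv z Hz).
Qed.

Lemma span_lincomb L x : span L x ->
  exists lc, (forall p, In p lc -> In (snd p) L) /\ x = lincomb X lc.
Proof.
  intro H; induction H as [v Hv| |x y _ (l1 & H1 & ->) _ (l2 & H2 & ->)|a x _ (l & Hl & ->)].
  - exists ((1, v) :: nil); split; [intros p [<-|[]]; auto | simpl; veq].
  - now exists nil.
  - exists (l1 ++ l2); split; [intros p Hp; apply in_app_or in Hp; destruct Hp; auto|].
    clear; induction l1; simpl; [now rewrite ns_add0l | rewrite <- IHl1; veq].
  - exists (map (fun p => (a * fst p, snd p)) l); split.
    + intros p Hp; apply in_map_iff in Hp as (q & <- & Hq); simpl; auto.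
    + clear; induction l; simpl; [now rewrite ns_scal0r | rewrite <- IHl; veq].
Qed.

Lemma exists_not_in_span : infinite_dimensional X -> forall L, exists z, ~ span L z.
Proof.
  intros Hinf L; apply NNPP; intro Hall; apply Hinf; exists L; intro x.
  apply span_lincomb; apply NNPP; intro Hx; apply Hall; eauto.
Qed.

(* Riesz's lemma with constant 1/2: if z is at distance d > 0 from span L, normalise
   z - y0 for a y0 in span L with |z - y0| < 2 d. *)
Lemma riesz_lemma : infinite_dimensional X -> forall L, exists e,
  ns_norm X e = 1 /\ forall y, span L y -> 1/2 <= ns_norm X (vsub X e y).
Proof.
  intros Hinf L; destruct (exists_not_in_span Hinf L) as (z & Hz).
  destruct (span_gap L z (span_closed_all L) Hz) as (e0 & He0 & Hgap).
  set (A e := forall y, span L y -> e <= ns_norm X (vsub X z y)).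
  destruct (completeness A) as (d & Hub & Hlub).
  { exists (ns_norm X (vsub X z (ns_zero X))); intros e He; apply He, span_zero. }
  { now exists e0. }
  assert (Hd0 : e0 <= d) by now apply Hub.
  assert (Hd : A d) by (intros y Hy; apply Hlub; intros e He; auto).
  assert (Hy0 : exists y0, span L y0 /\ ns_norm X (vsub X z y0) < 2 * d).
  { apply NNPP; intro Hn; assert (A (2 * d)) as H2d.
    { intros y Hy; apply Rnot_lt_le; intro Hlt; apply Hn; eauto. }
    apply Hub in H2d; lra. }
  destruct Hy0 as (y0 & Hy0 & Hlt).
  set (rho := ns_norm X (vsub X z y0)) in Hlt.
  assert (Hrho : d <= rho) by now apply Hd.
  assert (Hrho_inv : 0 <= / rho) by (apply Rlt_le, Rinv_0_lt_compat; lra).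
  exists (ns_scal X (/ rho) (vsub X z y0)); split.
  - rewrite ns_norm_scal, Rabs_pos_eq by auto; fold rho; field; lra.
  - intros y Hy.
    replace (vsub X (ns_scal X (/ rho) (vsub X z y0)) y)
      with (ns_scal X (/ rho) (vsub X z (ns_add X y0 (ns_scal X rho y)))) by (veq; field; lra).
    rewrite ns_norm_scal, Rabs_pos_eq by auto.
    assert (d <= ns_norm X (vsub X z (ns_add X y0 (ns_scal X rho y)))).
    { apply Hd, span_add; auto; now apply span_scal. }
    apply (Rmult_le_reg_l rho); [lra|].
    rewrite <- Rmult_assoc, Rinv_r, Rmult_1_l by lra; lra.
Qed.

End Spans.

Section RieszSequence.
Variables (Z : NormedSpace) (base : list Z).
Hypothesis Zinf : infinite_dimensional Z.

Definition riesz_vector (L : list Z) : Z :=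
  epsilon (inhabits (ns_zero Z))
    (fun e => ns_norm Z e = 1 /\ forall y, span Z L y -> 1/2 <= ns_norm Z (vsub Z e y)).

Lemma riesz_vector_spec L :
  ns_norm Z (riesz_vector L) = 1 /\
  forall y, span Z L y -> 1/2 <= ns_norm Z (vsub Z (riesz_vector L) y).
Proof. unfold riesz_vector; apply epsilon_spec, riesz_lemma, Zinf. Qed.

Fixpoint riesz_family (n : nat) : list Z :=
  match n with
  | O => base
  | S n => riesz_vector (riesz_family n) :: riesz_family n
  end.

Definition riesz_seq (n : nat) : Z := riesz_vector (riesz_family n).

Lemma riesz_family_mono m n v : (m <= n)%nat -> In v (riesz_family m) -> In v (riesz_family n).
Proof. intro Hmn; induction Hmn; simpl; auto. Qed.

Lemma span_base_family n x : span Z base x -> span Z (riesz_family n) x.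
Proof. apply span_sub_list; intro v; apply (riesz_family_mono 0); lia. Qed.

Lemma riesz_seq_in_family m n : (m < n)%nat -> In (riesz_seq m) (riesz_family n).
Proof. intro H; apply (riesz_family_mono (S m)); [lia | simpl; auto]. Qed.

Lemma riesz_seq_norm n : ns_norm Z (riesz_seq n) = 1.
Proof. apply riesz_vector_spec. Qed.

Lemma riesz_seq_gap n y :
  span Z (riesz_family n) y -> 1/2 <= ns_norm Z (vsub Z (riesz_seq n) y).
Proof. apply riesz_vector_spec. Qed.

Lemma riesz_seq_same n x mu lam :
  span Z base x -> 1 <= ns_norm Z x -> Rabs lam <= Rabs mu ->
  Rabs mu <= 3 * ns_norm Z (ns_add Z (ns_scal Z mu x) (ns_scal Z lam (riesz_seq n))).
Proof.
  intros Hx Hx1 Hlam.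
  pose proof (coef_le_norm_of_gap Z _ _ _ _ lam (riesz_seq_gap n)
                (span_scal Z _ mu x (span_base_family n x Hx))) as Hcoef.
  pose proof (norm_add_ge_sub Z (ns_scal Z mu x) (ns_scal Z lam (riesz_seq n))) as Htri.
  rewrite !ns_norm_scal, riesz_seq_norm in Htri.
  pose proof (Rabs_pos mu); nra.
Qed.

Lemma riesz_seq_lt m n x c1 c2 : (m < n)%nat ->
  span Z base x -> 0 <= c1 -> 0 <= c2 ->
  Rmax c1 c2 <= 6 * ns_norm Z (vsub Z (ns_add Z x (ns_scal Z c1 (riesz_seq m)))
                                      (ns_scal Z c2 (riesz_seq n))).
Proof.
  intros Hmn Hx Hc1 Hc2.
  set (y := ns_add Z x (ns_scal Z c1 (riesz_seq m))).
  assert (Hy : span Z (riesz_family n) y).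
  { apply span_add; [now apply span_base_family|].
    apply span_scal, span_base, riesz_seq_in_family, Hmn. }
  pose proof (coef_le_norm_of_gap Z _ _ _ _ (- c2) (riesz_seq_gap n) Hy) as Hn.
  pose proof (coef_le_norm_of_gap Z _ _ _ _ c1 (riesz_seq_gap m)
                (span_base_family m x Hx)) as Hm.
  pose proof (norm_add_ge_sub Z y (ns_opp Z (ns_scal Z c2 (riesz_seq n)))) as Htri.
  replace (ns_add Z y (ns_scal Z (- c2) (riesz_seq n)))
    with (vsub Z y (ns_scal Z c2 (riesz_seq n))) in Hn by veq.
  rewrite normN, ns_norm_scal, riesz_seq_norm in Htri.
  rewrite Rabs_Ropp in Hn; rewrite !Rabs_pos_eq in * by lra.
  fold y in Hm; unfold Rmax; destruct (Rle_dec c1 c2); lra.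
Qed.

Lemma riesz_seq_distinct m n x c1 c2 : m <> n ->
  span Z base x -> 0 <= c1 -> 0 <= c2 ->
  Rmax c1 c2 <= 6 * ns_norm Z (vsub Z (ns_add Z x (ns_scal Z c1 (riesz_seq m)))
                                      (ns_scal Z c2 (riesz_seq n))).
Proof.
  intros Hmn Hx Hc1 Hc2; destruct (Nat.lt_total m n) as [Hlt|[->|Hlt]]; [| easy |].
  - now apply riesz_seq_lt.
  - replace (vsub Z (ns_add Z x (ns_scal Z c1 (riesz_seq m))) (ns_scal Z c2 (riesz_seq n)))
      with (ns_opp Z (vsub Z (ns_add Z (ns_opp Z x) (ns_scal Z c2 (riesz_seq n)))
                              (ns_scal Z c1 (riesz_seq m)))) by veq.
    rewrite normN, Rmax_comm; apply riesz_seq_lt; auto; now apply span_opp.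
Qed.

End RieszSequence.

(** * The embedding of the thickening *)

Lemma gdist_spec {V : Type} (adj : V -> V -> Prop) u v : connected adj ->
  walk adj u v (gdist adj u v) /\ forall m, walk adj u v m -> (gdist adj u v <= m)%nat.
Proof.
  intro Hconn; unfold gdist; apply epsilon_spec.
  destruct (dec_inh_nat_subset_has_unique_least_element (walk adj u v)) as (n & Hn & _).
  - intro n; apply classic.
  - apply Hconn.
  - now exists n.
Qed.

Lemma gdistR_adj {V : Type} (adj : V -> V -> Prop) a b :
  simple_graph adj -> connected adj -> adj a b -> gdistR adj a b = 1.
Proof.
  intros [_ Hirr] Hconn Hab; unfold gdistR.
  destruct (gdist_spec adj a b Hconn) as [Hwalk Hmin].
  assert (Hle1 : (gdist adj a b <= 1)%nat) by (apply Hmin; econstructor; eauto; constructor).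
  destruct (gdist adj a b) as [|[|n]]; [| reflexivity | lia].
  inversion Hwalk; subst; exfalso; eapply Hirr; eauto.
Qed.

Lemma Rmin4_cases a b c d :
  Rmin4 a b c d = a \/ Rmin4 a b c d = b \/ Rmin4 a b c d = c \/ Rmin4 a b c d = d.
Proof. unfold Rmin4, Rmin; repeat destruct Rle_dec; tauto. Qed.

Lemma Rmin4_le a b c d :
  Rmin4 a b c d <= a /\ Rmin4 a b c d <= b /\ Rmin4 a b c d <= c /\ Rmin4 a b c d <= d.
Proof. unfold Rmin4, Rmin; repeat destruct Rle_dec; lra. Qed.

Definition via_len {V : Type} (adj : V -> V -> Prop) (p q : TPoint adj) : R :=
  Rmin4 (tp_t p + gdistR adj (tp_a p) (tp_a q) + tp_t q)
        (tp_t p + gdistR adj (tp_a p) (tp_b q) + (1 - tp_t q))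
        ((1 - tp_t p) + gdistR adj (tp_b p) (tp_a q) + tp_t q)
        ((1 - tp_t p) + gdistR adj (tp_b p) (tp_b q) + (1 - tp_t q)).

Lemma tdist_bounds {V : Type} (adj : V -> V -> Prop) (p q : TPoint adj) (N A B : R) :
  0 <= B -> N <= B * via_len adj p q ->
  (tp_a p = tp_a q /\ tp_b p = tp_b q ->
     N <= B * Rabs (tp_t p - tp_t q) /\ Rabs (tp_t p - tp_t q) <= A * N) ->
  (tp_a p = tp_b q /\ tp_b p = tp_a q ->
     N <= B * Rabs (tp_t p - (1 - tp_t q)) /\ Rabs (tp_t p - (1 - tp_t q)) <= A * N) ->
  (~ (tp_a p = tp_a q /\ tp_b p = tp_b q) -> ~ (tp_a p = tp_b q /\ tp_b p = tp_a q) ->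
     via_len adj p q <= A * N) ->
  tdist adj p q <= A * N /\ N <= B * tdist adj p q.
Proof.
  intros HB Hvia Hsame Hrev Hdiff; unfold tdist; cbv zeta; fold (via_len adj p q).
  destruct (excluded_middle_informative _) as [Hs|Hs];
    [|destruct (excluded_middle_informative _) as [Hr|Hr]].
  - destruct (Hsame Hs); split; [eapply Rle_trans; [apply Rmin_r | auto]|].
    unfold Rmin; destruct Rle_dec; auto.
  - destruct (Hrev Hr); split; [eapply Rle_trans; [apply Rmin_r | auto]|].
    unfold Rmin; destruct Rle_dec; auto.
  - auto.
Qed.

Definition tent (s : R) : R := Rmin s (1 - s).

Lemma tent_bounds s : 0 <= s <= 1 -> 0 <= tent s /\ tent s <= s /\ tent s <= 1 - s.
Proof. intros; unfold tent, Rmin; destruct Rle_dec; lra. Qed.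

Lemma tent_lipschitz s t : Rabs (tent s - tent t) <= Rabs (s - t).
Proof.
  unfold tent, Rmin; destruct (Rle_dec s (1 - s)), (Rle_dec t (1 - t));
    unfold Rabs; repeat destruct Rcase_abs; lra.
Qed.

Lemma tent_1m t : tent (1 - t) = tent t.
Proof. unfold tent, Rmin; destruct (Rle_dec (1 - t) (1 - (1 - t))), (Rle_dec t (1 - t)); lra. Qed.

Section ThickeningEmbedding.
Variables (V : Type) (adj : V -> V -> Prop) (Z : NormedSpace) (base : list Z)
          (w : V -> Z) (E : V -> V -> Z) (D : R).
Hypothesis D_ge1 : 1 <= D.
Hypothesis w_bilip : forall u v, gdistR adj u v <= ns_dist Z (w u) (w v) <= D * gdistR adj u v.
Hypothesis adj_sym : forall a b, adj a b -> adj b a.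
Hypothesis gdistR_adj1 : forall a b, adj a b -> gdistR adj a b = 1.
Hypothesis w_span : forall v, span Z base (w v).
Hypothesis E_sym : forall a b, E a b = E b a.
Hypothesis E_norm : forall a b, ns_norm Z (E a b) = 1.
Hypothesis E_same : forall a b x mu lam,
  span Z base x -> 1 <= ns_norm Z x -> Rabs lam <= Rabs mu ->
  Rabs mu <= 3 * ns_norm Z (ns_add Z (ns_scal Z mu x) (ns_scal Z lam (E a b))).
Hypothesis E_distinct : forall a b c d, ~ (a = c /\ b = d) -> ~ (a = d /\ b = c) ->
  forall x c1 c2, span Z base x -> 0 <= c1 -> 0 <= c2 ->
  Rmax c1 c2 <= 6 * ns_norm Z (vsub Z (ns_add Z x (ns_scal Z c1 (E a b))) (ns_scal Z c2 (E c d))).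

Definition seg_point (a b : V) (s : R) : Z := ns_add Z (w a) (ns_scal Z s (vsub Z (w b) (w a))).

Definition edge_point (a b : V) (s : R) : Z :=
  ns_add Z (seg_point a b s) (ns_scal Z (tent s) (E a b)).

Definition thick_map (p : TPoint adj) : Z := edge_point (tp_a p) (tp_b p) (tp_t p).

Lemma edge_vector_bounds a b : adj a b -> 1 <= ns_norm Z (vsub Z (w b) (w a)) <= D.
Proof.
  intro Hab; pose proof (w_bilip b a) as H.
  rewrite (gdistR_adj1 b a (adj_sym _ _ Hab)) in H; unfold ns_dist in H; lra.
Qed.

Lemma seg_point_near_a a b s : adj a b -> 0 <= s ->
  ns_norm Z (vsub Z (seg_point a b s) (w a)) <= D * s.
Proof.
  intros Hab Hs; unfold seg_point.
  replace (vsub Z (ns_add Z (w a) (ns_scal Z s (vsub Z (w b) (w a)))) (w a))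
    with (ns_scal Z s (vsub Z (w b) (w a))) by veq.
  rewrite ns_norm_scal, Rabs_pos_eq by lra.
  destruct (edge_vector_bounds a b Hab); nra.
Qed.

Lemma seg_point_near_b a b s : adj a b -> s <= 1 ->
  ns_norm Z (vsub Z (seg_point a b s) (w b)) <= D * (1 - s).
Proof.
  intros Hab Hs; unfold seg_point.
  replace (vsub Z (ns_add Z (w a) (ns_scal Z s (vsub Z (w b) (w a)))) (w b))
    with (ns_scal Z (- (1 - s)) (vsub Z (w b) (w a))) by veq.
  rewrite ns_norm_scal, Rabs_Ropp, Rabs_pos_eq by lra.
  destruct (edge_vector_bounds a b Hab); nra.
Qed.

Lemma edge_point_near_a a b s : adj a b -> 0 <= s <= 1 ->
  ns_norm Z (vsub Z (edge_point a b s) (w a)) <= (D + 1) * s.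
Proof.
  intros Hab Hs; unfold edge_point.
  replace (vsub Z (ns_add Z (seg_point a b s) (ns_scal Z (tent s) (E a b))) (w a))
    with (ns_add Z (vsub Z (seg_point a b s) (w a)) (ns_scal Z (tent s) (E a b))) by veq.
  eapply Rle_trans; [apply ns_norm_triangle|]; rewrite ns_norm_scal, E_norm.
  pose proof (seg_point_near_a a b s Hab (proj1 Hs)).
  destruct (tent_bounds s Hs) as (? & ? & ?); rewrite Rabs_pos_eq by lra; lra.
Qed.

Lemma edge_point_near_b a b s : adj a b -> 0 <= s <= 1 ->
  ns_norm Z (vsub Z (edge_point a b s) (w b)) <= (D + 1) * (1 - s).
Proof.
  intros Hab Hs; unfold edge_point.
  replace (vsub Z (ns_add Z (seg_point a b s) (ns_scal Z (tent s) (E a b))) (w b))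
    with (ns_add Z (vsub Z (seg_point a b s) (w b)) (ns_scal Z (tent s) (E a b))) by veq.
  eapply Rle_trans; [apply ns_norm_triangle|]; rewrite ns_norm_scal, E_norm.
  pose proof (seg_point_near_b a b s Hab (proj2 Hs)).
  destruct (tent_bounds s Hs) as (? & ? & ?); rewrite Rabs_pos_eq by lra; lra.
Qed.

Lemma dist_through_vertices P Q x y al be :
  ns_norm Z (vsub Z P (w x)) <= (D + 1) * al ->
  ns_norm Z (vsub Z Q (w y)) <= (D + 1) * be ->
  ns_norm Z (vsub Z P Q) <= (D + 1) * (al + gdistR adj x y + be).
Proof.
  intros HP HQ.
  pose proof (norm_sub_triangle Z P (w x) Q); pose proof (norm_sub_triangle Z (w x) (w y) Q).
  rewrite (norm_subC Z (w y) Q) in *; destruct (w_bilip x y); unfold ns_dist in *.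
  pose proof (pos_INR (gdist adj x y)); unfold gdistR in *; nra.
Qed.

Lemma thick_map_le_via p q :
  ns_dist Z (thick_map p) (thick_map q) <= (D + 1) * via_len adj p q.
Proof.
  destruct p as [a b Hab s Hs], q as [c d Hcd t Ht]; unfold thick_map, via_len, ns_dist; simpl.
  destruct (Rmin4_cases (s + gdistR adj a c + t) (s + gdistR adj a d + (1 - t))
              (1 - s + gdistR adj b c + t) (1 - s + gdistR adj b d + (1 - t)))
    as [-> | [-> | [-> | ->]]];
    apply dist_through_vertices; first [apply edge_point_near_a | apply edge_point_near_b]; auto.
Qed.

Lemma edge_point_rev a b s : edge_point b a s = edge_point a b (1 - s).
Proof. unfold edge_point, seg_point; rewrite tent_1m, E_sym; veq. Qed.

Lemma edge_point_same_edge a b s t : adj a b ->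
  let N := ns_norm Z (vsub Z (edge_point a b s) (edge_point a b t)) in
  N <= (D + 1) * Rabs (s - t) /\ Rabs (s - t) <= 3 * N.
Proof.
  intros Hab N.
  assert (Hdiff : vsub Z (edge_point a b s) (edge_point a b t) =
    ns_add Z (ns_scal Z (s - t) (vsub Z (w b) (w a))) (ns_scal Z (tent s - tent t) (E a b)))
    by (unfold edge_point, seg_point; veq).
  pose proof (edge_vector_bounds a b Hab) as Hedge; pose proof (tent_lipschitz s t).
  unfold N; rewrite Hdiff; split.
  - eapply Rle_trans; [apply ns_norm_triangle|]; rewrite !ns_norm_scal, E_norm.
    pose proof (Rabs_pos (s - t)); nra.
  - apply E_same; auto; [now apply span_sub | lra].
Qed.

Lemma nearest_endpoint a b s : adj a b -> 0 <= s <= 1 -> exists x,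
  ns_norm Z (vsub Z (seg_point a b s) (w x)) <= D * tent s /\
  (x = a /\ tent s = s \/ x = b /\ tent s = 1 - s).
Proof.
  intros Hab Hs; unfold tent, Rmin; destruct Rle_dec.
  - exists a; split; [apply seg_point_near_a; [auto | lra] | now left].
  - exists b; split; [apply seg_point_near_b; [auto | lra] | now right].
Qed.

Lemma seg_points_le_edge_points a b s c d t : 0 <= tent s -> 0 <= tent t ->
  ns_norm Z (vsub Z (seg_point a b s) (seg_point c d t)) <=
  ns_norm Z (vsub Z (edge_point a b s) (edge_point c d t)) + tent s + tent t.
Proof.
  intros Hs0 Ht0.
  replace (vsub Z (seg_point a b s) (seg_point c d t))
    with (ns_add Z (vsub Z (edge_point a b s) (edge_point c d t))
            (vsub Z (ns_scal Z (tent t) (E c d)) (ns_scal Z (tent s) (E a b))))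
    by (unfold edge_point; veq).
  eapply Rle_trans; [apply ns_norm_triangle|].
  pose proof (ns_norm_triangle Z (ns_scal Z (tent t) (E c d))
                (ns_opp Z (ns_scal Z (tent s) (E a b)))) as Htri.
  rewrite normN, !ns_norm_scal, !E_norm, !Rabs_pos_eq in Htri by lra; lra.
Qed.

Lemma tents_le_distinct_edges a b c d s t :
  ~ (a = c /\ b = d) -> ~ (a = d /\ b = c) -> 0 <= tent s -> 0 <= tent t ->
  tent s + tent t <= 12 * ns_norm Z (vsub Z (edge_point a b s) (edge_point c d t)).
Proof.
  intros Hn1 Hn2 Hs0 Ht0.
  assert (Hspan : span Z base (vsub Z (seg_point a b s) (seg_point c d t))).
  { unfold seg_point; repeat first [apply span_add | apply span_scal | apply span_opp | apply w_span]. }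
  pose proof (E_distinct a b c d Hn1 Hn2 _ _ _ Hspan Hs0 Ht0) as Hmax.
  replace (vsub Z (ns_add Z (vsub Z (seg_point a b s) (seg_point c d t))
                     (ns_scal Z (tent s) (E a b))) (ns_scal Z (tent t) (E c d)))
    with (vsub Z (edge_point a b s) (edge_point c d t)) in Hmax by (unfold edge_point; veq).
  pose proof (Rmax_l (tent s) (tent t)); pose proof (Rmax_r (tent s) (tent t)); lra.
Qed.

(* Both tent heights are O(|f p - f q|); going from the segment points to their nearest
   endpoints costs at most D times the heights, and the vertices are D-bilipschitz. *)
Lemma via_le_thick_map p q :
  ~ (tp_a p = tp_a q /\ tp_b p = tp_b q) -> ~ (tp_a p = tp_b q /\ tp_b p = tp_a q) ->
  via_len adj p q <= (12 * D + 25) * ns_dist Z (thick_map p) (thick_map q).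
Proof.
  destruct p as [a b Hab s Hs], q as [c d Hcd t Ht]; unfold thick_map, via_len, ns_dist; simpl.
  intros Hn1 Hn2.
  destruct (tent_bounds s Hs) as (Hs0 & _), (tent_bounds t Ht) as (Ht0 & _).
  pose proof (tents_le_distinct_edges a b c d s t Hn1 Hn2 Hs0 Ht0) as Htent.
  pose proof (seg_points_le_edge_points a b s c d t Hs0 Ht0) as Hseg.
  set (N := ns_norm Z (vsub Z (edge_point a b s) (edge_point c d t))) in *.
  destruct (nearest_endpoint a b s Hab Hs) as (x & Hx & Hxab).
  destruct (nearest_endpoint c d t Hcd Ht) as (y & Hy & Hycd).
  assert (Hvia : Rmin4 (s + gdistR adj a c + t) (s + gdistR adj a d + (1 - t))
                   (1 - s + gdistR adj b c + t) (1 - s + gdistR adj b d + (1 - t))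
                 <= tent s + gdistR adj x y + tent t).
  { destruct (Rmin4_le (s + gdistR adj a c + t) (s + gdistR adj a d + (1 - t))
                (1 - s + gdistR adj b c + t) (1 - s + gdistR adj b d + (1 - t))) as (? & ? & ? & ?).
    destruct Hxab as [[-> ->]|[-> ->]], Hycd as [[-> ->]|[-> ->]]; lra. }
  assert (Hxy : gdistR adj x y <=
                D * tent s + ns_norm Z (vsub Z (seg_point a b s) (seg_point c d t)) + D * tent t).
  { destruct (w_bilip x y) as [Hl _]; unfold ns_dist in Hl.
    pose proof (norm_sub_triangle Z (w x) (seg_point a b s) (w y)).
    pose proof (norm_sub_triangle Z (seg_point a b s) (seg_point c d t) (w y)).
    rewrite (norm_subC Z (w x) (seg_point a b s)) in *; lra. }
  assert ((D + 2) * (tent s + tent t) <= (D + 2) * (12 * N)) by (apply Rmult_le_compat_l; lra).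
  lra.
Qed.

Theorem thick_map_bounds p q :
  tdist adj p q <= (12 * D + 25) * ns_dist Z (thick_map p) (thick_map q) /\
  ns_dist Z (thick_map p) (thick_map q) <= (D + 1) * tdist adj p q.
Proof.
  apply tdist_bounds; [lra | apply thick_map_le_via | | | apply via_le_thick_map].
  - destruct p as [a b Hab s Hs], q as [c d Hcd t Ht]; simpl; intros [<- <-].
    unfold thick_map, ns_dist; simpl.
    pose proof (norm_ge0 Z (vsub Z (edge_point a b s) (edge_point a b t))).
    destruct (edge_point_same_edge a b s t Hab); split; nra.
  - destruct p as [a b Hab s Hs], q as [c d Hcd t Ht]; simpl; intros [<- <-].
    unfold thick_map, ns_dist; simpl; rewrite (edge_point_rev a b t).
    pose proof (norm_ge0 Z (vsub Z (edge_point a b s) (edge_point a b (1 - t)))).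
    destruct (edge_point_same_edge a b s (1 - t) Hab); split; nra.
Qed.

End ThickeningEmbedding.

Definition upair_code (i j : nat) : nat := (Nat.max i j * Nat.max i j + Nat.min i j)%nat.

Lemma upair_codeC i j : upair_code i j = upair_code j i.
Proof. unfold upair_code; now rewrite Nat.max_comm, Nat.min_comm. Qed.

Lemma upair_code_inj i j i' j' :
  upair_code i j = upair_code i' j' -> (i = i' /\ j = j') \/ (i = j' /\ j = i').
Proof.
  unfold upair_code; intro H.
  assert (Hmax : Nat.max i j = Nat.max i' j').
  { destruct (Nat.lt_trichotomy (Nat.max i j) (Nat.max i' j')) as [Hl|[Hl|Hl]]; auto; exfalso.
    - assert (S (Nat.max i j) * S (Nat.max i j) <= Nat.max i' j' * Nat.max i' j')%nat
        by (apply Nat.mul_le_mono; lia); lia.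
    - assert (S (Nat.max i' j') * S (Nat.max i' j') <= Nat.max i j * Nat.max i j)%nat
        by (apply Nat.mul_le_mono; lia); lia. }
  rewrite Hmax in H; assert (Nat.min i j = Nat.min i' j') by lia; lia.
Qed.

Definition list_index {V : Type} (l : list V) (v : V) : nat :=
  epsilon (inhabits 0%nat) (fun n => nth_error l n = Some v).

Lemma list_index_inj {V : Type} (l : list V) u v :
  In u l -> In v l -> list_index l u = list_index l v -> u = v.
Proof.
  intros Hu Hv Heq.
  assert (Hspec : forall x, In x l -> nth_error l (list_index l x) = Some x)
    by (intros x Hx; unfold list_index; apply epsilon_spec, In_nth_error, Hx).
  pose proof (Hspec u Hu) as Hnu; rewrite Heq, Hspec in Hnu by exact Hv; congruence.
Qed.

Lemma rescaled_embedding {V : Type} (g : V -> V -> R) (X Z : NormedSpace) (tau : V -> X) D :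
  finite_dimensional X -> is_subspace_of X Z -> distortion_le g (ns_dist X) tau D ->
  exists base (w : V -> Z),
    (forall u v, g u v <= ns_dist Z (w u) (w v) <= D * g u v) /\ forall v, span Z base (w v).
Proof.
  intros [basis Hbasis] (j & Hj_add & Hj_scal & Hj_norm) (r & Hr & Htau).
  assert (Hj_sub : forall x y, j (vsub X x y) = vsub Z (j x) (j y))
    by (intros; now rewrite Hj_add, ns_opp_scal, Hj_scal, <- ns_opp_scal).
  assert (Hr_inv : 0 < / r) by now apply Rinv_0_lt_compat.
  exists (map j basis), (fun v => ns_scal Z (/ r) (j (tau v))); split.
  - intros u v; unfold ns_dist.
    replace (vsub Z (ns_scal Z (/ r) (j (tau u))) (ns_scal Z (/ r) (j (tau v))))
      with (ns_scal Z (/ r) (j (vsub X (tau u) (tau v)))) by (rewrite Hj_sub; veq).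
    rewrite ns_norm_scal, Hj_norm, Rabs_pos_eq by lra.
    destruct (Htau u v) as [Hlo Hhi]; unfold ns_dist in Hlo, Hhi.
    split; apply (Rmult_le_reg_l r); auto;
      rewrite <- Rmult_assoc, Rinv_r, Rmult_1_l by lra; lra.
  - intro v; apply span_scal; destruct (Hbasis (tau v)) as (lc & Hlc & ->).
    induction lc as [|[a x] lc IH]; simpl.
    + rewrite <- (ns_scal0l X (ns_zero X)), Hj_scal, ns_scal0l; apply span_zero.
    + rewrite Hj_add, Hj_scal; apply span_add.
      * apply span_scal, span_base, in_map, (Hlc (a, x)); simpl; auto.
      * apply IH; intros; apply Hlc; simpl; auto.
Qed.

Lemma distortion_le_of_bounds {A B : Type} (dA : A -> A -> R) (dB : B -> B -> R)
  (f : A -> B) (a b : R) : 0 < a ->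
  (forall x y, dA x y <= a * dB (f x) (f y) /\ dB (f x) (f y) <= b * dA x y) ->
  distortion_le dA dB f (b * a).
Proof.
  intros Ha Hf; exists (/ a); split; [now apply Rinv_0_lt_compat|]; intros x y.
  destruct (Hf x y) as [Hlo Hhi]; split.
  - apply (Rmult_le_reg_l a); auto; rewrite <- Rmult_assoc, Rinv_r, Rmult_1_l by lra; lra.
  - now replace (/ a * (b * a) * dA x y) with (b * dA x y) by (field; lra).
Qed.

Theorem lemma2p11 :
  exists F : R -> R, (forall x, 1 <= x -> 1 <= F x) /\
    forall (V : Type) (adj : V -> V -> Prop),
      finite_type V -> simple_graph adj -> connected adj ->
      forall (X : NormedSpace) (tau : V -> X) (D : R),
        Banach X -> finite_dimensional X -> 1 <= D ->
        has_distortion (gdistR adj) (ns_dist X) tau D ->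
        forall Z : NormedSpace,
          Banach Z -> infinite_dimensional Z -> is_subspace_of X Z ->
          exists f : TPoint adj -> Z,
            distortion_le (tdist adj) (ns_dist Z) f (F D).
Proof.
  exists (fun D => (D + 1) * (12 * D + 25)); split; [intros; nra|].
  intros V adj [l Hl] Hsimple Hconn X tau D _ HfinX HD [Htau _] Z _ Zinf Hsub.
  destruct (rescaled_embedding (gdistR adj) X Z tau D HfinX Hsub Htau) as (base & w & Hw & Hspan).
  set (E a b := riesz_seq Z base (upair_code (list_index l a) (list_index l b))).
  exists (thick_map V adj Z w E); apply distortion_le_of_bounds; [lra|].
  apply (thick_map_bounds V adj Z base w E D HD Hw (proj1 Hsimple)
           (fun a b => gdistR_adj adj a b Hsimple Hconn) Hspan).
  - intros a b; unfold E; now rewrite upair_codeC.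
  - intros; apply riesz_seq_norm, Zinf.
  - intros; now apply riesz_seq_same.
  - intros a b c d Hac Had x c1 c2; apply riesz_seq_distinct; auto.
    intro Hcode; apply upair_code_inj in Hcode as [[Ha Hb]|[Ha Hb]];
      apply list_index_inj in Ha; auto; apply list_index_inj in Hb; auto.
Qed.
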